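(* Let $n\ge3$. The elements of $R$ whose binary representation has length $2n+7$ and begins with $100100$ are exactly $[100100(10)^{n-1}010]_2$ and $[100100(10)^n0]_2$.
   Context: Stern's sequence $(a(n))_{n\ge0}$: $a(0)=0$, $a(1)=1$, $a(2n)=a(n)$, $a(2n+1)=a(n)+a(n+1)$; $s(n)=a(n+1)$. $R$ is the set of record-setters of $s$, i.e. indices $v\ge0$ with $s(i)<s(v)$ for all $i<v$. Binary representations have no leading zeros. For a binary string $x$, $[x]_2$ is the integer it represents in base 2; $x^i$ denotes $i$-fold concatenation. *)

From mathcomp Require Import all_boot.
Set Implicit Arguments. Unset Strict Implicit. Unset Printing Implicit Defensive.

(* Stern's diatomic sequence a(n), computed with fuel (fuel n suffices). *)
Fixpoint stern_fuel (fuel n : nat) : nat :=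
  match fuel with
  | 0 => 0
  | f.+1 =>
    if n == 0 then 0 else if n == 1 then 1 else
    if ~~ odd n then stern_fuel f n./2
    else stern_fuel f n./2 + stern_fuel f n./2.+1
  end.
Definition a (n : nat) : nat := stern_fuel n.+1 n.
Definition s (n : nat) : nat := a n.+1.

Definition record_setter (v : nat) : Prop := forall i, i < v -> s i < s v.

(* Binary representation, most significant bit first, no leading zeros
   (bin 0 = [::]); true = 1, false = 0. *)
Fixpoint bin_fuel (fuel n : nat) : seq bool :=
  match fuel with
  | 0 => [::]
  | f.+1 => if n == 0 then [::] else rcons (bin_fuel f n./2) (odd n)
  end.
Definition bin (n : nat) : seq bool := bin_fuel n.+1 n.

Definition val2 (x : seq bool) : nat := foldl (fun (acc : nat) (b : bool) => acc.*2 + nat_of_bool b) 0 x.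

Definition srep (i : nat) (x : seq bool) : seq bool := flatten (nseq i x).

Example a_test : map a (iota 0 10) = [:: 0; 1; 1; 2; 1; 3; 2; 3; 1; 4]. Proof. by []. Qed.
Example bin_test : bin 6 = [:: true; true; false]. Proof. by []. Qed.
Example val_test : val2 [:: true; true; false] = 6. Proof. by []. Qed.

From mathcomp Require Import all_boot zify.
Set Implicit Arguments. Unset Strict Implicit.

(* Reading the binary digits of j from the left, the pair (a j, a (j+1))
   evolves by (x, y) -> (x + y, y) on a 1 and (x, y) -> (x, x + y) on a 0, so t
   more digits enlarge it by at most Fibonacci factors.  Every j' < j agrees
   with j up to a digit where j has a 1 and j' a 0, which bounds max_{j' < j} a j'
   by Fibonacci combinations.  Let (X, Y) be the pair at q = [100100 (10)^(n-1)]_2.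
   Up to 8q + 2, the maximum W of a is reached below the window of numbers with
   prefix 100100, and W < a (8q + 3) = 3X + 2Y, so 8q + 2 is a record-setter;
   8q + 3 is not, as a (8q + 4) = X + Y; 8q + 4 is, with a (8q + 5) = 2X + 3Y, and
   this value bounds a on the rest of the window. *)

Lemma stern_fuel_stable f1 f2 n :
  n < f1 -> n < f2 -> stern_fuel f1 n = stern_fuel f2 n.
Proof.
elim: f1 f2 n => [|f1 IH] [|f2] n //= lt1 lt2.
case: eqP => // /eqP n_neq0; case: eqP => // /eqP n_neq1.
have half_lt : n./2 < n by rewrite ltn_half_double; lia.
case odd_n: (odd n) => /=; last by rewrite (IH f2) //; lia.
have halfS_lt : n./2.+1 < n by have := odd_double_half n; rewrite odd_n /=; lia.
by rewrite (IH f2 n./2) ?(IH f2 n./2.+1) //; lia.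
Qed.

Lemma a_rec n : 2 <= n ->
  a n = if ~~ odd n then a n./2 else a n./2 + a n./2.+1.
Proof.
move=> n_ge2; rewrite {1}/a /=.
have [-> | _] := eqVneq n 0; first by [].
have [-> | _] := eqVneq n 1; first by [].
have half_lt : n./2 < n by rewrite ltn_half_double; lia.
have a_small j : j < n -> stern_fuel n j = a j.
  by move=> lt_jn; apply: stern_fuel_stable; lia.
case odd_n: (odd n) => /=; last by rewrite a_small.
have halfS_lt : n./2.+1 < n by have := odd_double_half n; rewrite odd_n /=; lia.
by rewrite !a_small.
Qed.

Lemma a_double x : a x.*2 = a x.
Proof. by case: x => [|x] //; rewrite a_rec ?odd_double ?doubleK //=; lia. Qed.

Lemma a_doubleS x : a x.*2.+1 = a x + a x.+1.
Proof.
case: x => [|x] //.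
have half_eq : (x.+1).*2.+1./2 = x.+1 by have := half_bit_double x.+1 true; rewrite add1n.
by rewrite a_rec ?half_eq ?oddS ?odd_double //; lia.
Qed.

Lemma val2_foldl w acc :
  foldl (fun (acc : nat) (b : bool) => acc.*2 + b) acc w = acc * 2 ^ size w + val2 w.
Proof.
elim: w acc => [|b w IH] acc /=; first by rewrite muln1 addn0.
by rewrite /val2 /= !IH expnS; lia.
Qed.

Lemma val2_cat u w : val2 (u ++ w) = val2 u * 2 ^ size w + val2 w.
Proof. by rewrite {1}/val2 foldl_cat val2_foldl. Qed.

Lemma val2_cons b w : val2 (b :: w) = b * 2 ^ size w + val2 w.
Proof. by rewrite -cat1s val2_cat; case: b. Qed.

Lemma val2_rcons w b : val2 (rcons w b) = (val2 w).*2 + b.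
Proof. by rewrite -cats1 val2_cat expn1 muln2; case: b. Qed.

Lemma val2_lt w : val2 w < 2 ^ size w.
Proof.
elim/last_ind: w => [|w b IH] //.
by rewrite val2_rcons size_rcons expnS; case: b => /=; lia.
Qed.

Lemma val2_nseq_false m : val2 (nseq m false) = 0.
Proof. by elim: m => // m IH; rewrite val2_cons IH. Qed.

Lemma val2_bin_fuel f v : v < f -> val2 (bin_fuel f v) = v.
Proof.
elim: f v => [|f IH] v //= lt_vf.
have [-> | v_neq0] := eqVneq v 0; first by [].
rewrite val2_rcons IH; first by rewrite addnC odd_double_half.
rewrite ltn_half_double; lia.
Qed.

Lemma val2_bin v : val2 (bin v) = v.
Proof. exact: val2_bin_fuel. Qed.

Lemma bin_fuel_val2_true f w : val2 (true :: w) < f -> bin_fuel f (val2 (true :: w)) = true :: w.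
Proof.
elim/last_ind: w f => [|w b IH] [|f] //=; first by case: f.
rewrite -rcons_cons val2_rcons => lt_f.
have val2_pos : 0 < val2 (true :: w) by rewrite val2_cons /=; have := expn_gt0 2 (size w); lia.
rewrite addnC half_bit_double IH; last by lia.
have -> : (b + (val2 (true :: w)).*2 == 0) = false by apply/eqP; lia.
by rewrite oddD odd_double addbF; case: (b).
Qed.

Lemma bin_val2_true w : bin (val2 (true :: w)) = true :: w.
Proof. exact: bin_fuel_val2_true. Qed.

Fixpoint bits (m j : nat) : seq bool :=
  if m is m'.+1 then rcons (bits m' j./2) (odd j) else [::].

Lemma size_bits m j : size (bits m j) = m.
Proof. by elim: m j => [|m IH] j //=; rewrite size_rcons IH. Qed.

Lemma val2_bits m j : j < 2 ^ m -> val2 (bits m j) = j.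
Proof.
elim: m j => [|m IH] j /=; first by rewrite expn0; case: j.
move=> lt_j; rewrite val2_rcons IH; first by rewrite addnC odd_double_half.
by rewrite ltn_half_double -mul2n -expnS.
Qed.

Lemma bin_window w m v :
  size (bin v) = (size w).+1 + m /\ prefix (true :: w) (bin v) <->
  val2 (true :: w) * 2 ^ m <= v < (val2 (true :: w)).+1 * 2 ^ m.
Proof.
split.
- case=> size_v /prefixP [r bin_v].
  have size_r : size r = m by move: size_v; rewrite bin_v size_cat /=; lia.
  rewrite -[v]val2_bin bin_v val2_cat size_r mulSn.
  by have := val2_lt r; rewrite size_r; lia.
- move=> /andP [lo hi].
  set j := v - val2 (true :: w) * 2 ^ m.
  have lt_j : j < 2 ^ m by rewrite /j; rewrite mulSn in hi; lia.
  have -> : v = val2 (true :: w ++ bits m j) by rewrite -cat_cons val2_cat size_bits val2_bits // /j; lia.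
  by rewrite bin_val2_true -cat_cons size_cat size_bits prefix_prefix.
Qed.

Definition step (p : nat * nat) (b : bool) : nat * nat :=
  if b then (p.1 + p.2, p.2) else (p.1, p.1 + p.2).

Definition run (p : nat * nat) (w : seq bool) : nat * nat := foldl step p w.

Lemma run_cat p u w : run p (u ++ w) = run (run p u) w.
Proof. exact: foldl_cat. Qed.

Lemma stern_run w : (a (val2 w), a (val2 w).+1) = run (0, 1) w.
Proof.
elim/last_ind: w => [|w b IH] //.
rewrite val2_rcons /run foldl_rcons -/(run _ _) -IH.
by case: b; rewrite /step /= ?addn0 ?addn1 -?doubleS a_double a_doubleS.
Qed.

Lemma a_val2 w : a (val2 w) = (run (0, 1) w).1.
Proof. by rewrite -stern_run. Qed.

Fixpoint fib (n : nat) : nat :=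
  if n is m.+1 then (if m is k.+1 then fib m + fib k else 1) else 0.

Lemma fib0 : fib 0 = 0. Proof. by []. Qed.
Lemma fib1 : fib 1 = 1. Proof. by []. Qed.

Lemma fibSS n : fib n.+2 = fib n.+1 + fib n.
Proof. by []. Qed.

Lemma fib_add m n : fib (m + n).+1 = fib m.+1 * fib n.+1 + fib m * fib n.
Proof.
elim: m n => [|m IH] n; first by rewrite add0n /=; lia.
by rewrite addSnnS IH !fibSS; lia.
Qed.

Lemma fib_monotone n : fib n <= fib n.+1.
Proof. by case: n => [|n] //; rewrite fibSS leq_addr. Qed.

Lemma fib_gt0 n : 0 < fib n.+1.
Proof. by elim: n => [|n IH] //; rewrite fibSS; lia. Qed.

Arguments fib : simpl never.

Fixpoint run_max (t : nat) (p : nat * nat) : nat :=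
  if t is t'.+1 then maxn (run_max t' (step p false)) (run_max t' (step p true))
  else p.1.

Lemma run_le_run_max r p : (run p r).1 <= run_max (size r) p.
Proof.
elim: r p => [|b r IH] p //=.
by case: b; rewrite -/(run _ _) leq_max IH ?orbT.
Qed.

Lemma run_max_fib t x y :
  run_max t (x, y) <= fib t.+1 * maxn x y + fib t * minn x y.
Proof.
elim: t x y => [|t IH] x y; first by rewrite fib0 fib1 /=; lia.
change (run_max t.+1 (x, y)) with (maxn (run_max t (x, x + y)) (run_max t (x + y, y))).
have [le_xy | lt_yx] := leqP x y;
rewrite geq_max fibSS; apply/andP; split; apply: leq_trans (IH _ _) _;
  rewrite ?(maxn_idPr (leq_addr y x)) ?(minn_idPl (leq_addr y x))
          ?(maxn_idPl (leq_addl x y)) ?(minn_idPr (leq_addl x y)); nia.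
Qed.

Lemma run_max_step0 t x y :
  run_max t (step (x, y) false) <= fib t.+1 * (x + y) + fib t * x.
Proof.
by have := run_max_fib t x (x + y); rewrite (maxn_idPr _) ?(minn_idPl _) ?leq_addr.
Qed.

Arguments run_max : simpl never.

(* A word of length [size q] below [q] agrees with [q] up to a digit where [q]
   has a 1 and the word a 0. *)
Fixpoint lex_max (p : nat * nat) (q : seq bool) : nat :=
  if q is b :: q' then
    if b then maxn (run_max (size q') (step p false)) (lex_max (step p true) q')
    else lex_max (step p false) q'
  else 0.

Lemma run_le_lex_max q r p :
  size r = size q -> val2 r < val2 q -> (run p r).1 <= lex_max p q.
Proof.
elim: q r p => [|b q IH] [|c r] p //= [size_r].
rewrite !val2_cons size_r => lt_rq.
have := val2_lt r; have := val2_lt q; rewrite size_r.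
case: b lt_rq; case: c => /= lt_rq *; rewrite -/(run _ _).
- by rewrite leq_max IH ?orbT //; lia.
- by rewrite leq_max -size_r run_le_run_max.
- by lia.
- by apply: IH => //; lia.
Qed.

Lemma a_le_lex_max q j : j < val2 q -> a j <= lex_max (0, 1) q.
Proof.
move=> lt_jq; have lt_j : j < 2 ^ size q by apply: leq_trans lt_jq (ltnW (val2_lt q)).
by rewrite -(val2_bits lt_j) a_val2 run_le_lex_max ?size_bits ?val2_bits.
Qed.

Lemma srepS k (x : seq bool) : srep k.+1 x = x ++ srep k x.
Proof. by []. Qed.

Lemma srepSr k (x : seq bool) : srep k.+1 x = srep k x ++ x.
Proof.
elim: k => [|k IH]; first by rewrite /srep /= cats0.
by rewrite [LHS]srepS {1}IH catA.
Qed.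

Lemma size_srep k (x : seq bool) : size (srep k x) = k * size x.
Proof. by elim: k => [|k IH] //; rewrite srepS size_cat IH mulSn. Qed.

Definition step10 (p : nat * nat) : nat * nat := run p [:: true; false].

Lemma run_srep10 k p : run p (srep k [:: true; false]) = iter k step10 p.
Proof. by elim: k p => [|k IH] p //; rewrite srepS run_cat IH iterSr. Qed.

(* [step10] acts by the matrix [[1,1],[1,2]] = [[0,1],[1,1]]^2; the first
   identity is stated without subtraction. *)
Lemma iter_step10 k x y :
  (iter k step10 (x, y)).1 + fib (2 * k) * x = fib (2 * k).+1 * x + fib (2 * k) * y /\
  (iter k step10 (x, y)).2 = fib (2 * k) * x + fib (2 * k).+1 * y.
Proof.
elim: k => [|k]; first by rewrite /= fib0 fib1; lia.
rewrite iterS; case: (iter k step10 (x, y)) => u v /= [IH1 IH2].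
by rewrite mulnSr !addnS addn0 !fibSS; split; nia.
Qed.

Lemma lex_max_srep10 k p rest C :
  (forall i, i < k ->
     run_max ((2 * (k - i.+1)).+1 + size rest) (step (iter i step10 p) false) <= C) ->
  lex_max (iter k step10 p) rest <= C ->
  lex_max p (srep k [:: true; false] ++ rest) <= C.
Proof.
elim: k p => [|k IH] p branch_le last_le //.
rewrite srepS -catA [lex_max _ _]/= geq_max; apply/andP; split.
  by have := branch_le 0 (ltn0Sn k); rewrite size_cat size_srep subSS subn0 mulnC.
apply: IH => [i lt_ik|]; last by rewrite -iterSr.
by have := branch_le i.+1 lt_ik; rewrite iterSr subSS.
Qed.

Definition stem k := [:: true; false; false; true; false; false] ++ srep k [:: true; false].

Definition X k := (iter k step10 (4, 11)).1.
Definition Y k := (iter k step10 (4, 11)).2.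

Lemma iter_step10_XY k : iter k step10 (4, 11) = (X k, Y k).
Proof. by rewrite /X /Y; case: (iter _ _ _). Qed.

Lemma run_stem k : run (0, 1) (stem k) = (X k, Y k).
Proof. by rewrite run_cat run_srep10 iter_step10_XY. Qed.

Lemma XY_succ k : X k.+1 = X k + Y k /\ Y k.+1 = X k + Y k + Y k.
Proof. by rewrite /X /Y iterS; case: (iter _ _ _). Qed.

Lemma XY_fib k :
  X k = 4 * fib (2 * k).+1 + 7 * fib (2 * k) /\ Y k = 4 * fib (2 * k) + 11 * fib (2 * k).+1.
Proof. by have [] := iter_step10 k 4 11; rewrite -/(X k) -/(Y k); split; lia. Qed.

Lemma X_lt_Y k : X k < Y k.
Proof. by have [-> ->] := XY_fib k; have := fib_monotone (2 * k); have := fib_gt0 (2 * k); lia. Qed.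

(* The maximum of [a] up to [[stem k 010]_2]; it is attained at
   [[1000 (10)^(k+2) 1]_2], which precedes every number with prefix 100100. *)
Definition W k := 4 * fib (2 * k + 6) + fib (2 * k + 5).

Lemma a_W_witness k :
  a (val2 ([:: true; false; false; false] ++ srep (k + 2) [:: true; false] ++ [:: true])) = W k.
Proof.
rewrite a_val2 !run_cat run_srep10 /=.
have [] := iter_step10 (k + 2) 1 4; case: (iter _ _ _) => u v /= up vp.
rewrite (_ : 2 * (k + 2) = (2 * k).+4) ?fibSS in up vp; last by lia.
by rewrite /W !addnS addn0 !fibSS; lia.
Qed.

Lemma fib_even_ratio j : 2 <= j -> 3 * fib (2 * j).+1 <= 5 * fib (2 * j).
Proof.
case: j => [|[|j]] // _.
by rewrite (_ : 2 * j.+2 = (2 * j).+4) ?fibSS; lia.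
Qed.

Lemma fib_odd_ratio i : 8 * fib (2 * i) <= 5 * fib (2 * i).+1.
Proof.
case: i => [|[|i]] //; rewrite (_ : 2 * i.+2 = (2 * i).+4) ?fibSS; last by lia.
by have := fib_monotone (2 * i); lia.
Qed.

Lemma block_branch_le k i : i < k ->
  run_max (2 * (k - i)).+2 (step (iter i step10 (4, 11)) false) <= W k.
Proof.
move=> lt_ik; rewrite (_ : (2 * (k - i)).+2 = 2 * (k - i).+1); last by lia.
set j := (k - i).+1; have j_ge2 : 2 <= j by rewrite /j; lia.
rewrite iter_step10_XY; apply: leq_trans (run_max_step0 _ _ _) _.
have -> : W k = 4 * fib (2 * j + (2 * i).+3).+1 + fib (2 * j + (2 * i).+2).+1.
  by rewrite /W; congr (_ * fib _ + fib _); rewrite /j; lia.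
clearbody j; rewrite (fib_add (2 * j) (2 * i).+3) (fib_add (2 * j) (2 * i).+2) !fibSS.
have [-> ->] := XY_fib i; have := fib_even_ratio j_ge2; have := fib_odd_ratio i.
set A := fib (2 * j); set B := fib (2 * j).+1.
set c := fib (2 * i); set d := fib (2 * i).+1 => c_le d_le.
have p1 : 3 * B * (2 * c + d) <= 5 * A * (2 * c + d) by apply: leq_mul.
have p2 : 2 * A * (8 * c) <= 2 * A * (5 * d) by apply: leq_mul.
nia.
Qed.

Lemma lex_max_10010_le k R C :
  size R = 2 * k + 4 -> W k <= C -> lex_max (4, 7) R <= C ->
  lex_max (0, 1) ([:: true; false; false; true; false] ++ R) <= C.
Proof.
move=> size_R W_le tail_le.
have -> : lex_max (0, 1) ([:: true; false; false; true; false] ++ R) =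
  maxn (run_max (size R).+4 (0, 1)) (maxn (run_max (size R).+1 (1, 4)) (lex_max (4, 7) R)) by [].
rewrite size_R geq_max; apply/andP; split.
  apply: leq_trans (run_max_step0 _ 0 1) (leq_trans _ W_le).
  by rewrite /W !addnS addn0 !fibSS; lia.
rewrite geq_max tail_le andbT.
apply: leq_trans (run_max_step0 _ 1 3) (leq_trans _ W_le).
by rewrite /W !addnS addn0; lia.
Qed.

Lemma W_ge_3X_Y k : 3 * X k + Y k <= W k.
Proof.
have [-> ->] := XY_fib k; have := fib_monotone (2 * k).
by rewrite /W !addnS addn0 !fibSS; lia.
Qed.

Lemma W_lt_3X_2Y k : 2 <= k -> W k < 3 * X k + 2 * Y k.
Proof.
move=> k_ge2; have [-> ->] := XY_fib k.
have : fib (2 * k).+1 < 2 * fib (2 * k).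
  case: k k_ge2 => [|[|k]] // _.
  rewrite (_ : 2 * k.+2 = (2 * k).+4) ?fibSS; last by lia.
  by have := fib_gt0 (2 * k); lia.
by rewrite /W !addnS addn0 !fibSS; lia.
Qed.

Lemma XY_succ_fib k : X k.+1 + Y k.+1 = 11 * fib (2 * k + 4) + 4 * fib (2 * k + 3).
Proof.
have [-> ->] := XY_succ k; have [-> ->] := XY_fib k.
by rewrite !addnS addn0 !fibSS; lia.
Qed.

Lemma lex_max_stem_011 k : lex_max (0, 1) (stem k ++ [:: false; true; true]) <= W k.
Proof.
rewrite -catA; apply: (@lex_max_10010_le k) => //.
  by rewrite /= size_cat size_srep /=; lia.
apply: lex_max_srep10 => [i lt_ik|].
  by rewrite (_ : _ + size _ = (2 * (k - i)).+2) ?block_branch_le //=; lia.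
rewrite iter_step10_XY /lex_max /run_max /step /=.
by have := W_ge_3X_Y k; lia.
Qed.

Lemma lex_max_stem_101 k : 2 <= k ->
  lex_max (0, 1) (stem k ++ [:: true; false; true]) <= 3 * X k + 2 * Y k.
Proof.
move=> k_ge2; have W_lt := W_lt_3X_2Y k_ge2.
rewrite -catA; apply: (@lex_max_10010_le k) => [||]; last apply: lex_max_srep10 => [i lt_ik|].
- by rewrite /= size_cat size_srep /=; lia.
- exact: ltnW.
- apply: leq_trans (ltnW W_lt).
  by rewrite (_ : _ + size _ = (2 * (k - i)).+2) ?block_branch_le //=; lia.
rewrite iter_step10_XY.
change (lex_max (X k, Y k) _) with
  (maxn (run_max 2 (step (X k, Y k) false)) (maxn (X k + Y k) 0)).
rewrite maxn0 geq_max; apply/andP; split; last by lia.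
by apply: leq_trans (run_max_step0 2 _ _) _; rewrite !fibSS fib1 fib0; lia.
Qed.

Lemma lex_max_zeros_one m p : lex_max p (nseq m false ++ [:: true]) = p.1.
Proof. by elim: m p => [|m IH] [x y] //=; rewrite maxn0. Qed.

Lemma lex_max_100101 k : 2 <= k ->
  lex_max (0, 1) ([:: true; false; false; true; false; true] ++ nseq (2 * k).+2 false ++ [:: true])
  <= X k.+1 + Y k.+1.
Proof.
move=> k_ge2; have W_lt := W_lt_3X_2Y k_ge2; have X_lt := X_lt_Y k; have [XS YS] := XY_succ k.
apply: (@lex_max_10010_le k); [by rewrite /= size_cat size_nseq /=; lia | lia |].
change (lex_max (4, 7) _) with
  (maxn (run_max (size (nseq (2 * k).+2 false ++ [:: true])) (step (4, 7) false))
        (lex_max (11, 7) (nseq (2 * k).+2 false ++ [:: true]))).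
rewrite lex_max_zeros_one XY_succ_fib geq_max; apply/andP; split.
  rewrite size_cat size_nseq /= (_ : (2 * k).+2 + 1 = 2 * k + 3); last by lia.
  by apply: leq_trans (run_max_step0 _ 4 7) _; rewrite [2 * k + 4]addnS; lia.
by rewrite /= [2 * k + 4]addnS; have := fib_gt0 (2 * k + 3); lia.
Qed.

Lemma record_setter_by_bound v B :
  (forall j, j <= v -> a j <= B) -> B < s v -> record_setter v.
Proof. by move=> a_le lt_B i lt_iv; apply: leq_ltn_trans (a_le _ lt_iv) lt_B. Qed.

Lemma not_record_setter i v : i < v -> s v <= s i -> ~ record_setter v.
Proof. by move=> lt_iv le_s /(_ i lt_iv); rewrite ltnNge le_s. Qed.

Lemma val2_stem_bits k (b1 b2 b3 : bool) :
  val2 (stem k ++ [:: b1; b2; b3]) = val2 (stem k) * 8 + (b1 * 4 + b2 * 2 + b3).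
Proof. by rewrite val2_cat; case: b1; case: b2; case: b3. Qed.

Lemma stem_window k : 36 * 2 ^ (2 * k) <= val2 (stem k) < 37 * 2 ^ (2 * k).
Proof.
have size_k : size (srep k [:: true; false]) = 2 * k by rewrite size_srep mulnC.
rewrite /stem val2_cat size_k (_ : val2 [:: true; false; false; true; false; false] = 36) //.
by have := val2_lt (srep k [:: true; false]); rewrite size_k; lia.
Qed.

Section Window.

Variable k : nat.
Hypothesis k_ge2 : 2 <= k.
Let q := val2 (stem k).

Lemma a_stem bs : a (val2 (stem k ++ bs)) = (run (X k, Y k) bs).1.
Proof. by rewrite a_val2 run_cat run_stem. Qed.

Lemma a_stem_011 : a (q * 8 + 3) = 3 * X k + 2 * Y k.
Proof.
rewrite (_ : q * 8 + 3 = val2 (stem k ++ [:: false; true; true])); last by rewrite val2_stem_bits.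
by rewrite a_stem /=; lia.
Qed.

Lemma a_stem_100 : a (q * 8 + 4) = X k + Y k.
Proof.
rewrite (_ : q * 8 + 4 = val2 (stem k ++ [:: true; false; false])); last by rewrite val2_stem_bits.
by rewrite a_stem /=; lia.
Qed.

Lemma a_stem_101 : a (q * 8 + 5) = X k.+1 + Y k.+1.
Proof.
have [-> ->] := XY_succ k.
rewrite (_ : q * 8 + 5 = val2 (stem k ++ [:: true; false; true])); last by rewrite val2_stem_bits.
by rewrite a_stem /=; lia.
Qed.

Lemma a_le_W j : j <= q * 8 + 2 -> a j <= W k.
Proof.
move=> le_j; apply: leq_trans (lex_max_stem_011 k).
by apply: a_le_lex_max; rewrite val2_stem_bits -/q /=; lia.
Qed.

Lemma a_le_stem_011 j : j <= q * 8 + 4 -> a j <= 3 * X k + 2 * Y k.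
Proof.
move=> le_j; apply: leq_trans (lex_max_stem_101 k_ge2).
by apply: a_le_lex_max; rewrite val2_stem_bits -/q /=; lia.
Qed.

Lemma a_le_stem_101 j : j <= 37 * 2 ^ (2 * k + 3) -> a j <= X k.+1 + Y k.+1.
Proof.
move=> le_j; apply: leq_trans (lex_max_100101 k_ge2).
apply: a_le_lex_max; rewrite !val2_cat val2_nseq_false size_cat size_nseq /=.
rewrite (_ : val2 [:: true; false; false; true; false; true] = 37) // (_ : val2 [:: true] = 1) //.
by rewrite (_ : (2 * k).+2 + 1 = 2 * k + 3) /=; lia.
Qed.

Lemma W_attained : exists2 i, i < 36 * 2 ^ (2 * k + 3) & s i = W k.
Proof.
set r := srep (k + 2) [:: true; false] ++ [:: true].
have size_r : size r = 2 * k + 5 by rewrite size_cat size_srep /=; lia.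
have pow3 : 2 ^ (2 * k + 3) = 2 ^ (2 * k) * 8 by rewrite expnD.
have pow5 : 2 ^ (2 * k + 5) = 2 ^ (2 * k) * 32 by rewrite expnD.
have := val2_lt r; have := expn_gt0 2 (2 * k); rewrite size_r pow3 pow5 => pow_pos r_lt.
have j_eq : val2 ([:: true; false; false; false] ++ r) = 8 * 2 ^ (2 * k + 5) + val2 r.
  by rewrite val2_cat size_r.
rewrite pow5 in j_eq.
exists (val2 ([:: true; false; false; false] ++ r)).-1; first by lia.
by rewrite /s prednK ?a_W_witness //; lia.
Qed.

Lemma record_setter_stem_010 : record_setter (val2 (stem k ++ [:: false; true; false])).
Proof.
rewrite (_ : val2 _ = q * 8 + 2); last by rewrite val2_stem_bits.
apply: (@record_setter_by_bound _ (W k)) => [j|]; first by apply: a_le_W.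
by rewrite /s -(addnS (q * 8) 2) a_stem_011 W_lt_3X_2Y.
Qed.

Lemma record_setter_stem_100 : record_setter (val2 (stem k ++ [:: true; false; false])).
Proof.
rewrite (_ : val2 _ = q * 8 + 4); last by rewrite val2_stem_bits.
apply: (@record_setter_by_bound _ (3 * X k + 2 * Y k)) => [j|]; first by apply: a_le_stem_011.
rewrite /s -(addnS (q * 8) 4) a_stem_101; have [-> ->] := XY_succ k.
by have := X_lt_Y k; lia.
Qed.

Lemma record_setter_window v :
  36 * 2 ^ (2 * k + 3) <= v < 37 * 2 ^ (2 * k + 3) -> record_setter v ->
  v = val2 (stem k ++ [:: false; true; false]) \/ v = val2 (stem k ++ [:: true; false; false]).
Proof.
rewrite !val2_stem_bits -/q.
have pow3 : 2 ^ (2 * k + 3) = 2 ^ (2 * k) * 8 by rewrite expnD.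
rewrite pow3 => /andP [lo hi] rs.
have [lt_v | ge_v] := ltnP v (q * 8 + 2).
  have [i lt_i s_i] := W_attained; rewrite pow3 in lt_i.
  case: (not_record_setter (i := i) _ _ rs); first by lia.
  by rewrite s_i /s a_le_W.
have [-> | ne2] := eqVneq v (q * 8 + 2); first by left.
have [eq3 | ne3] := eqVneq v (q * 8 + 3).
  case: (not_record_setter (i := q * 8 + 2) _ _ rs); first by lia.
  by rewrite eq3 /s -(addnS _ 2) -(addnS _ 3) a_stem_011 a_stem_100; lia.
have [-> | ne4] := eqVneq v (q * 8 + 4); first by right.
case: (not_record_setter (i := q * 8 + 4) _ _ rs); first by lia.
by rewrite /s -(addnS _ 4) a_stem_101 a_le_stem_101 // pow3; lia.
Qed.

End Window.

Theorem mainTheorem18 (n : nat) (hn : 3 <= n) (v : nat) :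
  (record_setter v /\ size (bin v) = 2 * n + 7 /\
   prefix [:: true; false; false; true; false; false] (bin v))
  <->
  (v = val2 ([:: true; false; false; true; false; false]
               ++ srep n.-1 [:: true; false] ++ [:: false; true; false])
   \/
   v = val2 ([:: true; false; false; true; false; false]
               ++ srep n [:: true; false] ++ [:: false])).
Proof.
case: n hn => [|k] // hn; have k_ge2 : 2 <= k by lia.
rewrite [k.+1.-1]/= catA srepSr -catA -[_ ++ [:: false]]catA catA -/(stem k).
have -> : 2 * k.+1 + 7 = (size [:: false; false; true; false; false]).+1 + (2 * k + 3).
  by rewrite /=; lia.
have val2_head : val2 [:: true; false; false; true; false; false] = 36 by [].
split=> [[rs /bin_window] | cand].
  by rewrite val2_head => window; apply: record_setter_window.
split; first by case: cand => ->; [apply: record_setter_stem_010 | apply: record_setter_stem_100].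
apply/bin_window; rewrite val2_head expnD.
by have := stem_window k; case: cand => ->; rewrite val2_stem_bits; lia.
Qed.
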